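(* Let $n,k$ be integers with $1\le k\le n-2$ and let $c_0,\dots,c_{n-1}$ be real constants. For an ordered bid vector $b_1\ge\dots\ge b_n\ge 0$ define $r_i=c_0+c_1b_1+\dots+c_{i-1}b_{i-1}+c_ib_{i+1}+\dots+c_{n-1}b_n$ for $i=1,\dots,n$. If $r_n\ge 0$ for every ordered bid vector, then the corresponding TFRM is individually rational for users (IR$_u$): under truthful bidding, every included user has nonnegative utility for every ordered bid vector.
   Context: TFRM: the block includes $n$ transactions with bids ordered $b_1\ge\dots\ge b_n$ (truthful, $b_i=\theta_i$ the valuation); users $1,\dots,k$ are confirmed and each pays $b_{k+1}-r_i$; users $j\in\{k+1,\dots,n\}$ are included but unconfirmed and pay $-r_j$. User utility is $u_i=\mathbb{1}[i\text{ confirmed}]\,\theta_i-p_i$. *)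

From mathcomp Require Import all_boot all_order all_algebra.
Set Implicit Arguments. Unset Strict Implicit. Unset Printing Implicit Defensive.
Import Order.TTheory GRing.Theory Num.Theory.
Local Open Scope ring_scope.

(* Users / bids are 1-indexed: b 1 >= b 2 >= ... >= b n >= 0.
   Constants c 0, ..., c (n-1). Values of b, c outside these ranges are irrelevant. *)

Definition ordered_bids (R : realFieldType) (n : nat) (b : nat -> R) : Prop :=
  (forall i j : nat, (1 <= i)%N -> (i <= j)%N -> (j <= n)%N -> b j <= b i)
  /\ 0 <= b n.

Definition rebate (R : realFieldType) (n : nat) (c : nat -> R) (b : nat -> R)
    (i : nat) : R :=
  c 0%N + \sum_(1 <= j < i) c j * b j + \sum_(i <= j < n) c j * b j.+1.

(* TFRM payment: confirmed users 1..k pay b_{k+1} - r_i; included unconfirmed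
   users k+1..n pay -r_i. *)
Definition payment (R : realFieldType) (n k : nat) (c : nat -> R) (b : nat -> R)
    (i : nat) : R :=
  if (i <= k)%N then b k.+1 - rebate n c b i else - rebate n c b i.

Definition utility (R : realFieldType) (n k : nat) (c : nat -> R) (theta b : nat -> R)
    (i : nat) : R :=
  (if (i <= k)%N then theta i else 0) - payment n k c b i.

Definition IR_u (R : realFieldType) (n k : nat) (c : nat -> R) : Prop :=
  forall b : nat -> R, ordered_bids n b ->
    forall i : nat, (1 <= i)%N -> (i <= n)%N -> 0 <= utility n k c b b i.

From mathcomp Require Import all_boot all_order all_algebra.
From mathcomp Require Import zify ring.
Import Order.TTheory GRing.Theory Num.Theory.
Local Open Scope ring_scope.

(* The rebate [r_i] of a bid vector [b] is the rebate [r_n] of the ordered bid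
   vector obtained from [b] by deleting [b_i] and repeating [b_n] at the end.
   Hence [r_n >= 0] on all ordered bids forces every [r_i >= 0]; a confirmed
   user then gets [b_i - b_(k+1) + r_i >= 0] and an unconfirmed one [r_i >= 0]. *)

Section Rebates.

Variables (R : realFieldType) (n : nat).

Definition drop_bid (b : nat -> R) (i : nat) : nat -> R :=
  fun j => if (j < i)%N then b j else b (minn j.+1 n).

Lemma ordered_drop_bid (b : nat -> R) (i : nat) :
  ordered_bids n b -> ordered_bids n (drop_bid b i).
Proof.
move=> [b_decr b_n_ge0]; split; last first.
  by rewrite /drop_bid (_ : minn n.+1 n = n); [case: ifP | lia].
move=> i' j' i'_ge1 le_i'j' j'_le_n; rewrite /drop_bid.
case: (ltnP j' i) => [lt_j'i | le_ij']; case: (ltnP i' i) => [lt_i'i | le_ii'].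
- exact: b_decr.
- lia.
- apply: b_decr; lia.
- apply: b_decr; lia.
Qed.

Lemma rebate_drop_bid (c b : nat -> R) (i : nat) :
  (1 <= i <= n)%N -> rebate n c (drop_bid b i) n = rebate n c b i.
Proof.
move=> /andP[i_ge1 i_le_n].
rewrite /rebate (big_geq (leqnn n)) addr0 -addrA; congr (_ + _).
rewrite (@big_cat_nat _ _ _ i 1 n) //; congr (_ + _); apply: eq_big_nat => j.
  by move=> /andP[_ lt_ji]; rewrite /drop_bid lt_ji.
move=> /andP[le_ij lt_jn]; rewrite /drop_bid ltnNge le_ij /=.
by rewrite (_ : minn j.+1 n = j.+1) //; lia.
Qed.

Lemma rebate_ge0 (c b : nat -> R) (i : nat) :
  (forall b' : nat -> R, ordered_bids n b' -> 0 <= rebate n c b' n) ->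
  ordered_bids n b -> (1 <= i <= n)%N -> 0 <= rebate n c b i.
Proof.
move=> rebate_n_ge0 b_ord i_range; rewrite -rebate_drop_bid //.
exact/rebate_n_ge0/ordered_drop_bid.
Qed.

End Rebates.

Lemma utility_truthful (R : realFieldType) (n k : nat) (c b : nat -> R) (i : nat) :
  utility n k c b b i = (if (i <= k)%N then b i - b k.+1 else 0) + rebate n c b i.
Proof. by rewrite /utility /payment; case: ifP => _; ring. Qed.

Theorem claim1 (R : realFieldType) (n k : nat) (c : nat -> R) :
  (1 <= k)%N -> (k <= n - 2)%N ->
  (forall b : nat -> R, ordered_bids n b -> 0 <= rebate n c b n) ->
  IR_u n k c.
Proof.
move=> _ k_le rebate_n_ge0 b b_ord i i_ge1 i_le_n.
rewrite utility_truthful addr_ge0 //; last by apply: rebate_ge0; rewrite ?i_ge1.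
case: ifP => // i_le_k; rewrite subr_ge0.
by case: b_ord => b_decr _; apply: b_decr; lia.
Qed.
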